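(* Let $n\ge1$, $D\ge1$, and let $X_n=\{\mathbf{x}^0,\ldots,\mathbf{x}^{n-1}\}\subseteq\{0,1\}^D$ consist of $n$ pairwise distinct vectors, indexed so that $\mathbf{a}\cdot\mathbf{x}^0<\cdots<\mathbf{a}\cdot\mathbf{x}^{n-1}$ for some $\mathbf{a}\in\mathbb{Z}^D$. Then there is a five-layer Boolean threshold network with layer sizes $D$, $n$, $\lceil\log_2 n\rceil$, $n$, $D$ that is a perfect autoencoder for $X_n$, with the third layer (of size $\lceil\log_2 n\rceil$) as middle layer.
   Context: A Boolean threshold function is a map $\{0,1\}^h\to\{0,1\}$, $\mathbf{u}\mapsto[\mathbf{w}\cdot\mathbf{u}\ge\theta]$ (value $1$ iff $\mathbf{w}\cdot\mathbf{u}\ge\theta$) with $\mathbf{w}\in\mathbb{Z}^h,\theta\in\mathbb{Z}$. An $L$-layer Boolean threshold network has layers $1,\ldots,L$; layer $1$ is the input; each node of layer $t+1$ computes a Boolean threshold function of the values of layer $t$. If layer $k$ is designated the middle layer, the encoder $\mathbf{f}$ is the map from layer $1$ values to layer $k$ values and the decoder $\mathbf{g}$ the map from layer $k$ values to layer $L$ values; the network is a perfect autoencoder for $X_n$ if $\mathbf{g}(\mathbf{f}(\mathbf{x}^i))=\mathbf{x}^i$ for all $i$. *)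

From mathcomp Require Import all_boot all_order all_algebra.
Set Implicit Arguments. Unset Strict Implicit. Unset Printing Implicit Defensive.
Import Order.TTheory GRing.Theory Num.Theory.
Local Open Scope ring_scope.

Definition bdot (h : nat) (w : 'I_h -> int) (u : {ffun 'I_h -> bool}) : int :=
  \sum_(i < h) w i * ((u i : nat)%:Z).

Definition threshold_fun (h : nat) (w : 'I_h -> int) (theta : int)
  (u : {ffun 'I_h -> bool}) : bool := theta <= bdot w u.

Record threshold_layer (h m : nat) := ThresholdLayer {
  layer_w : 'I_m -> 'I_h -> int;
  layer_theta : 'I_m -> int }.

Definition apply_layer (h m : nat) (l : threshold_layer h m)
  (u : {ffun 'I_h -> bool}) : {ffun 'I_m -> bool} :=
  [ffun j => threshold_fun (layer_w l j) (layer_theta l j) u].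

Record net5 (s1 s2 s3 s4 s5 : nat) := Net5 {
  net_l12 : threshold_layer s1 s2;
  net_l23 : threshold_layer s2 s3;
  net_l34 : threshold_layer s3 s4;
  net_l45 : threshold_layer s4 s5 }.

Definition encoder3 s1 s2 s3 s4 s5 (N : net5 s1 s2 s3 s4 s5) u :=
  apply_layer (net_l23 N) (apply_layer (net_l12 N) u).
Definition decoder3 s1 s2 s3 s4 s5 (N : net5 s1 s2 s3 s4 s5) v :=
  apply_layer (net_l45 N) (apply_layer (net_l34 N) v).

Definition perfect_autoencoder3 D s2 s3 s4 (N : net5 D s2 s3 s4 D)
  (n : nat) (x : 'I_n -> {ffun 'I_D -> bool}) : Prop :=
  forall i : 'I_n, decoder3 N (encoder3 N (x i)) = x i.

From mathcomp Require Import all_boot all_order all_algebra zify.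
Import Order.TTheory GRing.Theory Num.Theory.
Set Implicit Arguments. Unset Strict Implicit. Unset Printing Implicit Defensive.
Local Open Scope ring_scope.

(* The first layer turns x^i into the thermometer code of i (node j fires iff
   a.x^j <= a.x^i, i.e. iff j <= i).  A single threshold layer maps the
   thermometer code of i to an arbitrary table entry f i: with the first
   differences of a column of f as weights, the weighted sum telescopes to
   that column's entry.  Taking f i = binary digits of i gives the encoder;
   the decoder's first layer recovers the thermometer code from the binary
   digits (weights 2^k, thresholds j), and a second table layer reads off x^i. *)

Lemma sum_binary_digits (m i : nat) : (i < 2 ^ m)%N ->
  (\sum_(k < m) 2 ^ k * odd (i %/ 2 ^ k))%N = i.
Proof.
elim: m i => [|m IH] i hi.
  by rewrite big_ord0; move: hi; rewrite expn0; case: i.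
rewrite big_ord_recl /= expn0 divn1 mul1n.
under eq_bigr => k _ do rewrite /bump /= add1n expnS divnMA -mulnA.
rewrite -big_distrr /= IH.
  by rewrite divn2 -[in RHS](odd_double_half i) -muln2 mulnC.
by rewrite divn2 -(@ltn_pmul2l 2) // -expnS; move: hi; rewrite -divn2; lia.
Qed.

Definition increments (g : nat -> int) (j : nat) : int :=
  if j is k.+1 then g k.+1 - g k else g 0%N.

Lemma sum_increments (g : nat -> int) (i : nat) :
  \sum_(j < i.+1) increments g j = g i.
Proof.
elim: i => [|i IH]; first by rewrite big_ord1.
by rewrite big_ord_recr /= IH addrC subrK.
Qed.

Definition thermometer (h i : nat) : {ffun 'I_h -> bool} := [ffun j : 'I_h => (j <= i)%N].

Definition binary (m i : nat) : {ffun 'I_m -> bool} := [ffun k : 'I_m => odd (i %/ 2 ^ k)].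

Lemma bdot_increments_thermometer (h i : nat) (g : nat -> int) : (i < h)%N ->
  bdot (fun j : 'I_h => increments g j) (thermometer h i) = g i.
Proof.
move=> hi; rewrite /bdot -sum_increments (big_ord_widen h (increments g) hi).
rewrite [RHS]big_mkcond; apply: eq_bigr => j _; rewrite ffunE ltnS.
by case: (j <= i)%N; rewrite ?mulr1 ?mulr0.
Qed.

Lemma bdot_pow2_binary (m i : nat) : (i < 2 ^ m)%N ->
  bdot (fun k : 'I_m => (2 ^ k)%:Z) (binary m i) = i%:Z.
Proof.
move=> hi; rewrite /bdot.
under eq_bigr => k _ do rewrite ffunE -PoszM.
by rewrite -(big_morph _ PoszD (erefl _)) sum_binary_digits.
Qed.

Definition thermometer_layer (h n : nat) (a : 'I_h -> int)
    (x : 'I_n -> {ffun 'I_h -> bool}) : threshold_layer h n :=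
  ThresholdLayer (fun _ => a) (fun j => bdot a (x j)).

Definition table_layer (n h : nat) (f : nat -> {ffun 'I_h -> bool}) :
    threshold_layer n h :=
  ThresholdLayer (fun d (j : 'I_n) => increments (fun i => (f i d : nat)%:Z) j)
    (fun _ => 1).

Definition binary_decoder_layer (m n : nat) : threshold_layer m n :=
  ThresholdLayer (fun _ (k : 'I_m) => (2 ^ k)%:Z) (fun j : 'I_n => (j : nat)%:Z).

Lemma apply_thermometer_layer (h n : nat) (a : 'I_h -> int)
    (x : 'I_n -> {ffun 'I_h -> bool}) :
  (forall i j : 'I_n, (i < j)%N -> bdot a (x i) < bdot a (x j)) ->
  forall i : 'I_n, apply_layer (thermometer_layer a x) (x i) = thermometer n i.
Proof.
move=> ha i; apply/ffunP => j; rewrite !ffunE /threshold_fun /=.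
case: (ltngtP j i) => [ji|ij|/val_inj->]; last by rewrite lexx.
- by rewrite ltW ?ha.
- by apply/negbTE; rewrite -ltNge ha.
Qed.

Lemma apply_table_layer (n h i : nat) (f : nat -> {ffun 'I_h -> bool}) :
  (i < n)%N -> apply_layer (table_layer n f) (thermometer n i) = f i.
Proof.
move=> hi; apply/ffunP => d; rewrite ffunE /threshold_fun /=.
by rewrite (bdot_increments_thermometer _ hi) lez_nat lt0b.
Qed.

Lemma apply_binary_decoder_layer (m n i : nat) : (i < 2 ^ m)%N ->
  apply_layer (binary_decoder_layer m n) (binary m i) = thermometer n i.
Proof.
move=> hi; apply/ffunP => j; rewrite !ffunE /threshold_fun /=.
by rewrite bdot_pow2_binary // lez_nat.
Qed.

Theorem theorem21 (n D : nat) (hn : (1 <= n)%N) (hD : (1 <= D)%N)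
  (x : 'I_n -> {ffun 'I_D -> bool})
  (hdist : injective x)
  (hord : exists a : 'I_D -> int,
      forall i j : 'I_n, (i < j)%N -> bdot a (x i) < bdot a (x j)) :
  exists N : net5 D n (up_log 2 n) n D, perfect_autoencoder3 N x.
Proof.
case: hord => a ha.
pose i0 : 'I_n := Ordinal hn.
pose m := up_log 2 n.
exists (Net5 (thermometer_layer a x) (table_layer n (binary m))
  (binary_decoder_layer m n) (table_layer n (fun i => x (insubd i0 i)))).
move=> i; rewrite /decoder3 /encoder3 /=.
have i_lt_pow : (i < 2 ^ m)%N by apply: leq_trans (up_logP n _).
rewrite apply_thermometer_layer // apply_table_layer //.
rewrite apply_binary_decoder_layer // apply_table_layer //.
by congr (x _); apply: val_inj; rewrite val_insubd ltn_ord.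
Qed.
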